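(* Let $(\mathcal A,d)$ be a DGA, let $a,b_1,\dots,b_n\in\mathcal A$ be closed with $|a|$ even and $a\wedge b_i$ exact, and let $\xi_i$ satisfy $d\xi_i=a\wedge b_i$. Let $c=\sum_{i=1}^n \overline{\xi_1}\wedge\cdots\wedge\overline{\xi_{i-1}}\wedge b_i\wedge\xi_{i+1}\wedge\cdots\wedge\xi_n$. Let $\sigma$ be the transposition of $\{1,\dots,n\}$ exchanging $j$ and $j+1$ for some $j$, and let $$c_\sigma=\sum_{i=1}^n \overline{\xi_{\sigma(1)}}\wedge\cdots\wedge\overline{\xi_{\sigma(i-1)}}\wedge b_{\sigma(i)}\wedge\xi_{\sigma(i+1)}\wedge\cdots\wedge\xi_{\sigma(n)}.$$ Then $c=(-1)^{(|b_j|+1)(|b_{j+1}|+1)}c_\sigma$.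
   Context: A DGA is a graded-commutative differential graded algebra over $\mathbb R$; $|x|$ denotes degree and $\overline{x}=(-1)^{|x|}x$. *)

From HB Require Import structures.
From mathcomp Require Import all_boot all_order all_algebra all_fingroup.
From mathcomp Require Export reals.
Set Implicit Arguments. Unset Strict Implicit. Unset Printing Implicit Defensive.
Import Order.TTheory GRing.Theory Num.Theory.
Local Open Scope ring_scope.

Definition sgn (R : ringType) (p : int) : R := (-1) ^+ `|p|%N.

Definition bar (R : ringType) (A : lmodType R) (k : int) (x : A) : A := sgn R k *: x.

(* A (Z-)graded-commutative differential graded algebra over R:
   A is an associative unital R-algebra, H k is the homogeneous component of
   degree k, A = (+)_k H k (direct sum), H p * H q <= H (p+q), graded
   commutativity, d linear of degree +1, d o d = 0, graded Leibniz rule. *)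
Record isDGA (R : comNzRingType) (A : algType R) (H : int -> {pred A}) (d : A -> A)
  : Prop := {
  dga_H0 : forall k, 0 \in H k;
  dga_Hlin : forall k (r : R) x y, x \in H k -> y \in H k -> r *: x + y \in H k;
  dga_Hspan : forall x : A, exists s : seq (int * A),
      all (fun p => p.2 \in H p.1) s /\ x = \sum_(p <- s) p.2;
  dga_Hdirect : forall (s : seq int) (f : int -> A), uniq s ->
      (forall k, f k \in H k) -> \sum_(k <- s) f k = 0 ->
      forall k, k \in s -> f k = 0;
  dga_H1 : (1 : A) \in H 0;
  dga_Hmul : forall p q x y, x \in H p -> y \in H q -> x * y \in H (p + q);
  dga_comm : forall p q x y, x \in H p -> y \in H q ->
      x * y = sgn R (p * q) *: (y * x);
  dga_dlin : forall (r : R) x y, d (r *: x + y) = r *: d x + d y;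
  dga_ddeg : forall k x, x \in H k -> d x \in H (k + 1);
  dga_dd : forall x, d (d x) = 0;
  dga_leibniz : forall p x y, x \in H p ->
      d (x * y) = d x * y + sgn R p *: (x * d y)
}.

(* Since |a| is even,
   |xi_i| has the parity of |b_i| + 1, so exchanging xi_j and xi_(j+1), exchanging
   their bars, or moving b_j past xi_(j+1) (resp. xi_j past b_(j+1)) while adding
   or removing a bar, always costs the same sign (-1)^((|b_j|+1)(|b_(j+1)|+1)).
   Hence the i-th term of c is that sign times the i-th term of c_sigma for
   i not in {j, j+1}, while the j-th and (j+1)-th terms of c are that sign times
   the (j+1)-th and j-th terms of c_sigma respectively. *)
From HB Require Import structures.
From mathcomp Require Import all_boot all_order all_algebra all_fingroup.
From mathcomp Require Import reals.
From mathcomp Require Import zify.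
Import Order.TTheory GRing.Theory Num.Theory.
Local Open Scope ring_scope.

Lemma odd_abszD (x y : int) : odd (absz (x + y)) = odd (absz x) (+) odd (absz y).
Proof.
have : (absz (x + y)%R %% 2 = (absz x + absz y) %% 2)%N by lia.
by rewrite -oddD !modn2; do 2 case: odd.
Qed.

Lemma sgnE (R : nzRingType) (p : int) : sgn R p = (-1) ^+ odd (absz p).
Proof. by rewrite /sgn signr_odd. Qed.

Lemma sgnD (R : nzRingType) (p q : int) : sgn R (p + q) = sgn R p * sgn R q.
Proof. by rewrite !sgnE odd_abszD signr_addb. Qed.

Lemma eq_sgn (R : nzRingType) (p q : int) :
  odd (absz p) = odd (absz q) -> sgn R p = sgn R q.
Proof. by rewrite !sgnE => ->. Qed.

Definition adj_swap (j k : nat) : nat :=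
  if k == j then j.+1 else if k == j.+1 then j else k.

Lemma adj_swap_out j k : k != j -> k != j.+1 -> adj_swap j k = k.
Proof. by rewrite /adj_swap => /negbTE -> /negbTE ->. Qed.

Lemma adj_swapL j : adj_swap j j = j.+1.
Proof. by rewrite /adj_swap eqxx. Qed.

Lemma adj_swapR j : adj_swap j j.+1 = j.
Proof. by rewrite /adj_swap eqxx (gtn_eqF (ltnSn j)). Qed.

Lemma big_nat_split2 {T : Type} {idx : T} (op : Monoid.law idx) (F : nat -> T)
    (m j p : nat) : (m <= j)%N -> (j.+2 <= p)%N ->
  \big[op/idx]_(m <= k < p) F k =
  op (op (\big[op/idx]_(m <= k < j) F k) (op (F j) (F j.+1)))
     (\big[op/idx]_(j.+2 <= k < p) F k).
Proof.
move=> le_mj le_j2p; rewrite (big_cat_nat (n := j)) //; last by lia.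
rewrite (big_cat_nat (m := j) (n := j.+2)) //; last by lia.
by rewrite (big_ltn (m := j)) // big_nat1 Monoid.mulmA.
Qed.

Definition shuffle_term {A : pzRingType} (n : nat) (X B Y : nat -> A) (i : nat) : A :=
  (\prod_(0 <= k < i) X k) * B i * \prod_(i.+1 <= k < n) Y k.

Section ShuffleSwap.
Variables (R : pzRingType) (A : algType R) (X B Y : nat -> A) (e : R) (n j : nat).
Hypothesis lt_j1n : (j.+1 < n)%N.

Local Notation "F ^s" := (F \o adj_swap j) (at level 2, format "F ^s").

Lemma prod_adj_swap_out (F : nat -> A) (m p : nat) : (p <= j \/ j.+1 < m)%N ->
  \prod_(m <= k < p) F^s k = \prod_(m <= k < p) F k.
Proof.
move=> out; apply: eq_big_nat => k /andP[le_mk lt_kp] /=.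
by rewrite adj_swap_out //; apply/eqP; lia.
Qed.

Lemma shuffle_term_lt i : (i < j)%N -> Y j * Y j.+1 = e *: (Y j.+1 * Y j) ->
  shuffle_term n X B Y i = e *: shuffle_term n X^s B^s Y^s i.
Proof.
move=> lt_ij YY; rewrite /shuffle_term !(big_nat_split2 _ _ i.+1 j n) //; try lia.
rewrite !prod_adj_swap_out; try by [left; lia | right; lia].
rewrite /= adj_swapL adj_swapR adj_swap_out; try by apply/eqP; lia.
by rewrite YY -scalerAr -scalerAl -!scalerAr.
Qed.

Lemma shuffle_term_gt i : (j.+1 < i)%N -> X j * X j.+1 = e *: (X j.+1 * X j) ->
  shuffle_term n X B Y i = e *: shuffle_term n X^s B^s Y^s i.
Proof.
move=> lt_j1i XX; rewrite /shuffle_term !(big_nat_split2 _ _ 0 j i) //.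
rewrite !prod_adj_swap_out; try by [left; lia | right; lia].
rewrite /= adj_swapL adj_swapR adj_swap_out; try by apply/eqP; lia.
by rewrite XX -scalerAr -scalerAl -!scalerAl.
Qed.

Lemma shuffle_termL : B j * Y j.+1 = e *: (X j.+1 * B j) ->
  shuffle_term n X B Y j = e *: shuffle_term n X^s B^s Y^s j.+1.
Proof.
move=> BY; rewrite /shuffle_term big_nat_recr //= (big_ltn (m := j.+1)) //.
rewrite !prod_adj_swap_out; try by [left; lia | right; lia].
rewrite /= adj_swapL adj_swapR mulrA -(mulrA _ (B j)) BY.
by rewrite -scalerAr -scalerAl !mulrA.
Qed.

Lemma shuffle_termR : X j * B j.+1 = e *: (B j.+1 * Y j) ->
  shuffle_term n X B Y j.+1 = e *: shuffle_term n X^s B^s Y^s j.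
Proof.
move=> XB; rewrite /shuffle_term big_nat_recr //= (big_ltn (m := j.+1) (F := Y^s)) //.
rewrite !prod_adj_swap_out; try by [left; lia | right; lia].
rewrite /= adj_swapL adj_swapR -(mulrA _ (X j)) XB.
by rewrite -scalerAr -scalerAl !mulrA.
Qed.

Lemma shuffle_sum_adj_swap :
  X j * X j.+1 = e *: (X j.+1 * X j) ->
  Y j * Y j.+1 = e *: (Y j.+1 * Y j) ->
  B j * Y j.+1 = e *: (X j.+1 * B j) ->
  X j * B j.+1 = e *: (B j.+1 * Y j) ->
  \sum_(0 <= i < n) shuffle_term n X B Y i =
  e *: \sum_(0 <= i < n) shuffle_term n X^s B^s Y^s i.
Proof.
move=> XX YY BY XB; rewrite !(big_nat_split2 _ _ 0 j n) // !scalerDr !scaler_sumr.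
congr (_ + _ + _).
- by apply: eq_big_nat => i /andP[_ lt_ij]; apply: shuffle_term_lt.
- by rewrite shuffle_termL // shuffle_termR // addrC.
- by apply: eq_big_nat => i /andP[lt_j1i _]; apply: shuffle_term_gt.
Qed.

End ShuffleSwap.

Lemma eq_shuffle_term (A : pzRingType) (n : nat) (X B Y X' B' Y' : nat -> A) i :
  (i < n)%N -> {in gtn n, X =1 X'} -> {in gtn n, B =1 B'} -> {in gtn n, Y =1 Y'} ->
  shuffle_term n X B Y i = shuffle_term n X' B' Y' i.
Proof.
move=> lt_in eqX eqB eqY; rewrite /shuffle_term eqB //; congr (_ * _ * _).
  by apply: eq_big_nat => k /andP[_ lt_ki]; apply: eqX; rewrite inE; lia.
by apply: eq_big_nat => k /andP[_ lt_kn]; apply: eqY.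
Qed.

(* Indices move from 'I_n to nat (through [insubd], junk outside [0, n)) so that
   the interval lemmas on big operators apply. *)
Lemma sum_ord_shuffle {A : pzRingType} {n : nat} (i0 : 'I_n) (X B Y : 'I_n -> A) :
  \sum_(i < n) ((\prod_(k < n | (k < i)%N) X k) * B i * \prod_(k < n | (i < k)%N) Y k)
  = \sum_(0 <= i < n)
      shuffle_term n (X \o insubd i0) (B \o insubd i0) (Y \o insubd i0) i.
Proof.
rewrite big_mkord; apply: eq_bigr => i _; rewrite /shuffle_term /= valKd.
congr (_ * _ * _).
  rewrite (@big_nat_widen _ _ _ 0 i n) ?(ltnW (ltn_ord i)) // big_mkord.
  by apply: eq_big => [k|k _] //=; rewrite valKd.
rewrite (@big_nat_widenl _ _ _ i.+1 0 n) // big_mkord.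
by apply: eq_big => [k|k _] //=; rewrite valKd.
Qed.

Section OrdinalAdjacentSwap.
Context {n j : nat} (lt_j1n : (j.+1 < n)%N).
Let j0 : 'I_n := Ordinal (ltnW lt_j1n).
Let j1 : 'I_n := Ordinal lt_j1n.

Lemma insubd_adj_swap k : (k < n)%N ->
  insubd j0 (adj_swap j k) = tperm j0 j1 (insubd j0 k).
Proof.
move=> lt_kn; have val_k : val (insubd j0 k) = k by rewrite val_insubd lt_kn.
apply: val_inj; rewrite val_insubd; case: tpermP => [k_j0|k_j1|ne_j0 ne_j1].
- by rewrite -val_k k_j0 adj_swapL lt_j1n.
- by rewrite -val_k k_j1 adj_swapR ltnW.
rewrite adj_swap_out ?lt_kn // -val_k; apply/eqP => ?;
  [apply: ne_j0 | apply: ne_j1]; exact: val_inj.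
Qed.

Lemma sum_ord_shuffle_tperm {A : pzRingType} (X B Y : 'I_n -> A) :
  let s := tperm j0 j1 in
  \sum_(i < n) ((\prod_(k < n | (k < i)%N) X (s k)) * B (s i) *
                \prod_(k < n | (i < k)%N) Y (s k))
  = \sum_(0 <= i < n) shuffle_term n (X \o insubd j0 \o adj_swap j)
      (B \o insubd j0 \o adj_swap j) (Y \o insubd j0 \o adj_swap j) i.
Proof.
move=> s; rewrite (sum_ord_shuffle j0); apply: eq_big_nat => i /andP[_ lt_in].
by apply: eq_shuffle_term => // k; rewrite inE => lt_kn /=; rewrite insubd_adj_swap.
Qed.

End OrdinalAdjacentSwap.

Section AdjacentCommutation.
Context {R : comNzRingType} {A : algType R} {H : int -> {pred A}} {d : A -> A}.
Hypothesis HD : isDGA H d.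
Context {q0 q1 p0 p1 : int} {b0 b1 x0 x1 : A}.
Hypotheses (b0_q0 : b0 \in H q0) (b1_q1 : b1 \in H q1).
Hypotheses (x0_p0 : x0 \in H p0) (x1_p1 : x1 \in H p1).
Hypotheses (odd_p0 : odd (absz p0) = ~~ odd (absz q0))
           (odd_p1 : odd (absz p1) = ~~ odd (absz q1)).
Let e := sgn R ((q0 + 1) * (q1 + 1)).

Lemma dga_comm_odd_deg : x0 * x1 = e *: (x1 * x0).
Proof.
rewrite (dga_comm HD x0_p0 x1_p1) /e; congr (_ *: _); apply: eq_sgn.
by rewrite !(abszM, oddM, odd_abszD) odd_p0 odd_p1 /=; do 2 case: odd.
Qed.

Lemma dga_comm_bar : bar p0 x0 * bar p1 x1 = e *: (bar p1 x1 * bar p0 x0).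
Proof.
rewrite /bar -!scalerAl -!scalerAr dga_comm_odd_deg !scalerA.
by congr (_ *: _); rewrite mulrC -mulrA [sgn R p1 * _]mulrC mulrA.
Qed.

Lemma dga_comm_bar_left : b0 * x1 = e *: (bar p1 x1 * b0).
Proof.
rewrite (dga_comm HD b0_q0 x1_p1) /bar -scalerAl scalerA /e -sgnD.
congr (_ *: _); apply: eq_sgn.
by rewrite !(abszM, oddM, odd_abszD) odd_p1 /=; do 2 case: odd.
Qed.

Lemma dga_comm_bar_right : bar p0 x0 * b1 = e *: (b1 * x0).
Proof.
rewrite /bar -scalerAl (dga_comm HD x0_p0 b1_q1) scalerA /e -sgnD.
congr (_ *: _); apply: eq_sgn.
by rewrite !(abszM, oddM, odd_abszD) odd_p0 /=; do 2 case: odd.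
Qed.

End AdjacentCommutation.

Theorem lemma2p4 (R : realType) (A : algType R) (H : int -> {pred A})
  (d : A -> A) (HD : isDGA H d)
  (n : nat) (a : A) (da : int) (b xi : 'I_n -> A) (db : 'I_n -> int)
  (Ha : a \in H da) (Hda_even : ~~ odd `|da|%N) (Hda_closed : d a = 0)
  (Hb : forall i, b i \in H (db i)) (Hb_closed : forall i, d (b i) = 0)
  (Hxi : forall i, xi i \in H (da + db i - 1))
  (Hdxi : forall i, d (xi i) = a * b i)
  (j : nat) (hj : (j.+1 < n)%N) :
  let j0 : 'I_n := Ordinal (ltnW hj) in
  let j1 : 'I_n := Ordinal hj in
  let s : {perm 'I_n} := tperm j0 j1 in
  let c := \sum_(i < n)
      ((\prod_(k < n | (k < i)%N) bar (da + db k - 1) (xi k)) * b i *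
        \prod_(k < n | (i < k)%N) xi k) in
  let c_s := \sum_(i < n)
      ((\prod_(k < n | (k < i)%N) bar (da + db (s k) - 1) (xi (s k))) * b (s i) *
        \prod_(k < n | (i < k)%N) xi (s k)) in
  c = sgn R ((db j0 + 1) * (db j1 + 1)) *: c_s.
Proof.
move=> j0 j1 s c c_s.
have odd_deg_xi k : odd (absz (da + db k - 1)%R) = ~~ odd (absz (db k)).
  by rewrite !odd_abszD (negbTE Hda_even) /= addbT.
rewrite /c /c_s (sum_ord_shuffle j0)
  (sum_ord_shuffle_tperm hj (fun k => bar (da + db k - 1) (xi k))).
apply: shuffle_sum_adj_swap => //=; rewrite (valKd j0 j0 : insubd j0 j = j0)
  (valKd j0 j1 : insubd j0 j.+1 = j1).
- exact (dga_comm_bar HD (Hxi j0) (Hxi j1) (odd_deg_xi j0) (odd_deg_xi j1)).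
- exact (dga_comm_odd_deg HD (Hxi j0) (Hxi j1) (odd_deg_xi j0) (odd_deg_xi j1)).
- exact (dga_comm_bar_left HD (Hb j0) (Hxi j1) (odd_deg_xi j1)).
- exact (dga_comm_bar_right HD (Hb j1) (Hxi j0) (odd_deg_xi j0)).
Qed.
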